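(* Let $T$ be a first-order $\mathscr L$-theory, $\mathcal U_{\mathcal K}=\mathrm{Mod}(T_\forall)$, and $A\in\mathcal U_{\mathcal K}$. Then $A$ is weakly geometrically closed in $\mathcal U_{\mathcal K}$ if and only if for every finite tuple of variables $\bar x$ and every finite $a$-type $\pi$ of $A[\bar x]$, with $V=\pi(A)$, one has $tp_a^A(V)=\sqrt[T]{\pi}$ (the strong $T$-radical).
   Context: $T_\forall$: consequences of $T$ of the form $\forall\bar y(\bigwedge\Phi\to\bigvee\Psi)$, $\Phi,\Psi$ finite sets of atomic formulas. A homomorphism $f:A\to B$ is geometrically closed if every sentence $\forall\bar y\,(\bigwedge\Phi(\bar a,\bar y)\to\psi(\bar a,\bar y))$ ($\Phi\cup\{\psi\}$ finite sets of atomic formulas, parameters from $A$) true in $A$ holds in $B$ of $f\bar a$. $A$ is weakly geometrically closed in a class $\mathcal C$ if every embedding of $A$ into a member of $\mathcal C$ is geometrically closed. $A[\bar x]$ is the $\mathscr L(A)$-structure freely generated over $A$ by $\bar x$ (quotient by $D^+A$ of the term algebra of $\mathscr L\sqcup A\sqcup\bar x$); an $a$-type of $A[\bar x]$ is a set of atomic $\mathscr L(A)$-formulas in $\bar x$; it is closed if it contains every atomic formula implied by $D^+(A[\bar x])\cup\pi$, and $A[\bar x]/\pi$ is the corresponding quotient (terms identified and relations holding exactly when implied). $\pi$ is strongly $T$-prime if closed, $A[\bar x]/\pi\models T_\forall$ and $A\to A[\bar x]\to A[\bar x]/\pi$ is an embedding; $\sqrt[T]{\pi}$ is the intersection of strongly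 $T$-prime $a$-types containing $\pi$. $\pi(A)=\{\bar a:A\models\bigwedge\pi(\bar a)\}$; $tp_a^A(V)$ is the set of atomic $\mathscr L(A)$-formulas in $\bar x$ true of every point of $V$. *)

From Stdlib Require Import List ClassicalEpsilon.
From Stdlib Require Fin.
Set Implicit Arguments.
Unset Strict Implicit.

(** * Signatures (function symbols include constants as 0-ary symbols) *)
Record signature := Signature {
  func : Type; fun_ar : func -> nat;
  rel : Type; rel_ar : rel -> nat }.

Section FOL.
Variable L : signature.

(** Terms over a type V of leaves (variables and/or parameter constants). *)
Inductive term (V : Type) : Type :=
| tvar : V -> term V
| tapp : forall f : func L, (Fin.t (@fun_ar L f) -> term V) -> term V.
Arguments tvar {V} v.
Arguments tapp {V} f args.

Inductive atom (V : Type) : Type :=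
| aeq : term V -> term V -> atom V
| arel : forall r : rel L, (Fin.t (@rel_ar L r) -> term V) -> atom V.
Arguments aeq {V} t s.
Arguments arel {V} r args.

Fixpoint map_term (V W : Type) (g : V -> W) (t : term V) : term W :=
  match t with
  | tvar v => tvar (g v)
  | tapp f args => tapp f (fun i => map_term g (args i))
  end.

Definition map_atom (V W : Type) (g : V -> W) (a : atom V) : atom W :=
  match a with
  | aeq t s => aeq (map_term g t) (map_term g s)
  | arel r args => arel r (fun i => map_term g (args i))
  end.

Inductive formula : Type :=
| fatom : atom nat -> formula
| fbot : formula
| fnot : formula -> formula
| fand : formula -> formula -> formula
| f_or : formula -> formula -> formula
| fimp : formula -> formula -> formula
| fall : nat -> formula -> formula
| fex : nat -> formula -> formula.

Fixpoint occurs (V : Type) (x : V) (t : term V) : Prop :=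
  match t with
  | tvar y => x = y
  | tapp f args => exists i, occurs x (args i)
  end.

Definition occurs_atom (x : nat) (a : atom nat) : Prop :=
  match a with
  | aeq t s => occurs x t \/ occurs x s
  | arel r args => exists i, occurs x (args i)
  end.

Fixpoint free_in (x : nat) (phi : formula) : Prop :=
  match phi with
  | fatom a => occurs_atom x a
  | fbot => False
  | fnot p => free_in x p
  | fand p q | f_or p q | fimp p q => free_in x p \/ free_in x q
  | fall y p | fex y p => x <> y /\ free_in x p
  end.

Definition sentence (phi : formula) : Prop := forall x, ~ free_in x phi.

(** A theory is a set of sentences (the sentence condition is a hypothesis). *)
Definition theory := formula -> Prop.

Record structure := Structure {
  carrier :> Type;
  fint : forall f : func L, (Fin.t (@fun_ar L f) -> carrier) -> carrier;
  rint : forall r : rel L, (Fin.t (@rel_ar L r) -> carrier) -> Prop }.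
Arguments fint s f args : clear implicits.
Arguments rint s r args : clear implicits.

Fixpoint eval (M : structure) (V : Type) (v : V -> M) (t : term V) : M :=
  match t with
  | tvar x => v x
  | tapp f args => fint M f (fun i => eval v (args i))
  end.

Definition atom_sat (M : structure) (V : Type) (v : V -> M) (a : atom V) : Prop :=
  match a with
  | aeq t s => eval v t = eval v s
  | arel r args => rint M r (fun i => eval v (args i))
  end.

Definition update (M : Type) (rho : nat -> M) (x : nat) (m : M) : nat -> M :=
  fun y => if Nat.eqb y x then m else rho y.

Fixpoint sat (M : structure) (rho : nat -> M) (phi : formula) : Prop :=
  match phi with
  | fatom a => atom_sat rho a
  | fbot => False
  | fnot p => ~ sat rho p
  | fand p q => sat rho p /\ sat rho q
  | f_or p q => sat rho p \/ sat rho q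
  | fimp p q => sat rho p -> sat rho q
  | fall x p => forall m : M, sat (update rho x m) p
  | fex x p => exists m : M, sat (update rho x m) p
  end.

Definition model (T : theory) (M : structure) : Prop :=
  inhabited M /\ forall phi, T phi -> forall rho : nat -> M, sat rho phi.

(** The universal sentence  forall y (/\ Phi -> \/ Psi)  (closing all variables)
    holds in M. *)
Definition univ_holds (M : structure) (Phi Psi : list (atom nat)) : Prop :=
  forall rho : nat -> M,
    (forall a, In a Phi -> atom_sat rho a) -> exists b, In b Psi /\ atom_sat rho b.

Definition T_forall (T : theory) (Phi Psi : list (atom nat)) : Prop :=
  forall M : structure, model T M -> univ_holds M Phi Psi.

Definition Mod_T_forall (T : theory) (M : structure) : Prop :=
  inhabited M /\ forall Phi Psi, T_forall T Phi Psi -> univ_holds M Phi Psi.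

Definition homomorphism (A B : structure) (h : A -> B) : Prop :=
  (forall f args, h (fint A f args) = fint B f (fun i => h (args i))) /\
  (forall r args, rint A r args -> rint B r (fun i => h (args i))).

Definition embedding (A B : structure) (h : A -> B) : Prop :=
  homomorphism h /\ (forall a a', h a = h a' -> a = a') /\
  (forall r args, rint B r (fun i => h (args i)) -> rint A r args).

Definition pval (P V M : Type) (e : P -> M) (rho : V -> M) : P + V -> M :=
  fun z => match z with inl p => e p | inr y => rho y end.

Definition geom_closed (A B : structure) (h : A -> B) : Prop :=
  forall (Phi : list (atom (A + nat))) (psi : atom (A + nat)),
    (forall rho : nat -> A,
        (forall a, In a Phi -> atom_sat (pval (fun x => x) rho) a) ->
        atom_sat (pval (fun x => x) rho) psi) ->
    (forall rho : nat -> B,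
        (forall a, In a Phi -> atom_sat (pval h rho) a) ->
        atom_sat (pval h rho) psi).

Definition weakly_geom_closed (A : structure) (C : structure -> Prop) : Prop :=
  forall B : structure, C B -> forall h : A -> B, embedding h -> geom_closed h.

Section Free.
Variable A : structure.
Variable X : Type.

(** L(A)-terms / atomic L(A)-formulas in x : leaves are A-constants (inl) or
    variables of X (inr). An a-type of A[x] is a set of such atomic formulas. *)
Definition atype := atom (A + X) -> Prop.

Definition implied (Sigma : atype) (phi : atom (A + X)) : Prop :=
  forall (M : structure) (v : A + X -> M),
    (forall psi, Sigma psi -> atom_sat v psi) -> atom_sat v phi.

Definition diagA : atype :=
  fun phi => exists phi0 : atom A, phi = map_atom inl phi0 /\ atom_sat (fun a => a) phi0.

(** The quotient of the term algebra of L + A + x by the atomic consequences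
    of Sigma: terms identified, relations holding exactly when implied. *)
Definition qclass (Sigma : atype) (t : term (A + X)) : term (A + X) -> Prop :=
  fun s => implied Sigma (aeq t s).

Definition qcarrier (Sigma : atype) : Type :=
  { P : term (A + X) -> Prop | exists t, P = qclass Sigma t }.

Definition qproj (Sigma : atype) (t : term (A + X)) : qcarrier Sigma :=
  exist _ (qclass Sigma t) (ex_intro _ t eq_refl).

Definition qrep (Sigma : atype) (c : qcarrier Sigma) : term (A + X) :=
  proj1_sig (constructive_indefinite_description _ (proj2_sig c)).

Definition quotient (Sigma : atype) : structure :=
  {| carrier := qcarrier Sigma;
     fint := fun f args => qproj Sigma (tapp f (fun i => qrep (args i)));
     rint := fun r args => implied Sigma (arel r (fun i => qrep (args i))) |}.

Definition qval (Sigma : atype) : A + X -> quotient Sigma :=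
  fun z => qproj Sigma (tvar z).

Definition free_str : structure := quotient diagA.

(** D+(A[x]), written with the L(A)-terms in x naming the elements of A[x] *)
Definition diag_free : atype := fun phi => atom_sat (qval diagA) phi.

Definition closed_type (p : atype) : Prop :=
  forall phi, implied (fun psi => diag_free psi \/ p psi) phi -> p phi.

Definition quot_type (p : atype) : structure :=
  quotient (fun psi => diag_free psi \/ p psi).

Definition quot_map (p : atype) : A -> quot_type p :=
  fun a => qval (fun psi => diag_free psi \/ p psi) (inl a).

Definition strongly_T_prime (T : theory) (p : atype) : Prop :=
  closed_type p /\ Mod_T_forall T (quot_type p) /\ embedding (quot_map p).

Definition T_radical (T : theory) (pi : atype) : atype :=
  fun phi => forall p, strongly_T_prime T p -> (forall psi, pi psi -> p psi) -> p phi.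

Definition zero_set (pi : atype) : (X -> A) -> Prop :=
  fun abar => forall phi, pi phi -> atom_sat (pval (fun a => a) abar) phi.

Definition tp_a (V : (X -> A) -> Prop) : atype :=
  fun phi => forall abar, V abar -> atom_sat (pval (fun a => a) abar) phi.

End Free.
End FOL.

From Stdlib Require Import List.
From Stdlib Require Fin.
From Stdlib Require Import FunctionalExtensionality ProofIrrelevance PropExtensionality
  ClassicalEpsilon Arith Lia.
Set Implicit Arguments.

(* The atomic type of a tuple b of an extension B of A in Mod(T_forall) is strongly
   T-prime: the evaluation A[x]/tp(b) -> B is an embedding, so A[x]/tp(b) lies in
   Mod(T_forall) and A embeds into it.  Conversely, for p strongly T-prime, A[x]/p is
   such an extension and the generic point x realizes exactly p.  Hence sqrt[T](pi)
   consists of the atomic formulas holding at every solution of pi in every extension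
   of A in Mod(T_forall), whereas tp_a(pi(A)) only looks at solutions in A; weak
   geometric closedness says precisely that the two agree.  Going from formulas with
   variables in nat to types over a finite tuple only requires bounding the finitely
   many variables that occur. *)

Section Syntax.
Variable L : signature.

Lemma eval_map_term (M : structure L) V W (g : V -> W) (v : W -> M) (t : term L V) :
  eval v (map_term g t) = eval (fun x => v (g x)) t.
Proof.
  induction t as [x|f args IH]; simpl; auto.
  f_equal; apply functional_extensionality; intro i; apply IH.
Qed.

Lemma atom_sat_map_atom (M : structure L) V W (g : V -> W) (v : W -> M) (a : atom L V) :
  atom_sat v (map_atom g a) <-> atom_sat (fun x => v (g x)) a.
Proof.
  destruct a as [t s|r args]; simpl.
  - rewrite !eval_map_term; tauto.
  - replace (fun i => eval v (map_term g (args i)))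
      with (fun i => eval (fun x => v (g x)) (args i)); [tauto|].
    apply functional_extensionality; intro i; symmetry; apply eval_map_term.
Qed.

Definition occurs_in_atom V (z : V) (a : atom L V) : Prop :=
  match a with
  | aeq t s => occurs z t \/ occurs z s
  | @arel _ _ _ args => exists i, occurs z (args i)
  end.

Lemma eval_ext (M : structure L) V (v w : V -> M) (t : term L V) :
  (forall z, occurs z t -> v z = w z) -> eval v t = eval w t.
Proof.
  induction t as [x|f args IH]; simpl; intro H.
  - apply H; reflexivity.
  - f_equal; apply functional_extensionality; intro i; apply IH.
    intros z Hz; apply H; exists i; exact Hz.
Qed.

Lemma atom_sat_ext (M : structure L) V (v w : V -> M) (a : atom L V) :
  (forall z, occurs_in_atom z a -> v z = w z) -> (atom_sat v a <-> atom_sat w a).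
Proof.
  destruct a as [t s|r args]; simpl; intro H.
  - rewrite (eval_ext M v w t), (eval_ext M v w s); [tauto| |]; intros; apply H; auto.
  - replace (fun i => eval v (args i)) with (fun i => eval w (args i)); [tauto|].
    apply functional_extensionality; intro i; symmetry; apply eval_ext.
    intros; apply H; eauto.
Qed.

Definition vars_below P (n : nat) (a : atom L (P + nat)) : Prop :=
  forall k, occurs_in_atom (inr k) a -> k < n.

Lemma fin_family_bound m (R : Fin.t m -> nat -> Prop) :
  (forall i, exists n, forall k, R i k -> k < n) -> exists n, forall i k, R i k -> k < n.
Proof.
  revert R; induction m as [|m IH]; intros R H.
  - exists 0; intro i; apply (Fin.case0 (fun i => forall k, R i k -> k < 0) i).
  - destruct (H Fin.F1) as [n0 H0].
    destruct (IH (fun i => R (Fin.FS i)) (fun i => H (Fin.FS i))) as [n1 H1].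
    exists (n0 + n1); intro i.
    refine (Fin.caseS' i (fun i => forall k, R i k -> k < n0 + n1) _ _).
    + intros k Hk; specialize (H0 k Hk); lia.
    + intros j k Hk; specialize (H1 j k Hk); lia.
Qed.

Lemma term_vars_bounded P (t : term L (P + nat)) :
  exists n, forall k, occurs (inr k) t -> k < n.
Proof.
  induction t as [[p|j]|f args IH]; simpl.
  - exists 0; intros k Hk; discriminate.
  - exists (S j); intros k Hk; injection Hk; lia.
  - destruct (fin_family_bound (fun i k => occurs (inr k) (args i)) IH) as [n Hn].
    exists n; intros k [i Hi]; eauto.
Qed.

Lemma atom_vars_bounded P (a : atom L (P + nat)) : exists n, vars_below n a.
Proof.
  destruct a as [t s|r args]; simpl.
  - destruct (term_vars_bounded t) as [n1 H1], (term_vars_bounded s) as [n2 H2].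
    exists (n1 + n2); intros k [Hk|Hk]; [specialize (H1 k Hk)|specialize (H2 k Hk)]; lia.
  - destruct (fin_family_bound (fun i k => occurs (inr k) (args i))
                (fun i => term_vars_bounded (args i))) as [n Hn].
    exists n; intros k [i Hi]; eauto.
Qed.

Lemma atoms_vars_bounded P (l : list (atom L (P + nat))) :
  exists n, forall a, In a l -> vars_below n a.
Proof.
  induction l as [|a l [n Hn]].
  - exists 0; intros b [].
  - destruct (atom_vars_bounded a) as [m Hm]; exists (m + n).
    intros b [<-|Hb] k Hk; [specialize (Hm k Hk)|specialize (Hn b Hb k Hk)]; lia.
Qed.

End Syntax.

Section Quotient.
Variable L : signature.
Variable A : structure L.
Variable X : Type.
Variable Sigma : atype A X.

Lemma qproj_eq_iff (t s : term L (A + X)) :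
  qproj Sigma t = qproj Sigma s <-> implied Sigma (aeq t s).
Proof.
  split.
  - intro E.
    assert (Hs : qclass Sigma s s) by (intros M v _; reflexivity).
    apply (f_equal (@proj1_sig _ _)) in E; simpl in E; rewrite <- E in Hs; exact Hs.
  - intro H; unfold qproj.
    assert (E : qclass Sigma t = qclass Sigma s).
    { apply functional_extensionality; intro u; apply propositional_extensionality.
      split; intros H' M v HS; specialize (H M v HS); specialize (H' M v HS);
        simpl in *; congruence. }
    generalize (ex_intro (fun t0 => qclass Sigma t = qclass Sigma t0) t eq_refl).
    rewrite E; intro e; f_equal; apply proof_irrelevance.
Qed.

Lemma qproj_qrep (c : qcarrier Sigma) : qproj Sigma (qrep c) = c.
Proof.
  unfold qrep; destruct (constructive_indefinite_description _ (proj2_sig c)) as [t Ht].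
  destruct c as [P HP]; simpl in *; subst P.
  unfold qproj; f_equal; apply proof_irrelevance.
Qed.

Lemma implied_qrep (t : term L (A + X)) : implied Sigma (aeq (qrep (qproj Sigma t)) t).
Proof. apply qproj_eq_iff, qproj_qrep. Qed.

Lemma eval_qval (t : term L (A + X)) : eval (qval Sigma) t = qproj Sigma t.
Proof.
  induction t as [x|f args IH]; simpl; [reflexivity|].
  change (qproj Sigma (tapp (f := f) (fun i => qrep (eval (qval Sigma) (args i))))
          = qproj Sigma (tapp (f := f) args)).
  apply qproj_eq_iff; intros M v HS; simpl; f_equal.
  apply functional_extensionality; intro i; rewrite IH; apply (implied_qrep (args i) M v HS).
Qed.

Lemma atom_sat_qval (a : atom L (A + X)) : atom_sat (qval Sigma) a <-> implied Sigma a.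
Proof.
  destruct a as [t s|r args]; simpl.
  - rewrite !eval_qval; apply qproj_eq_iff.
  - change (implied Sigma (arel (r := r) (fun i => qrep (eval (qval Sigma) (args i))))
            <-> implied Sigma (arel (r := r) args)).
    assert (E : forall (M : structure L) (v : A + X -> M),
               (forall psi, Sigma psi -> atom_sat v psi) ->
               (fun i => eval v (qrep (eval (qval Sigma) (args i))))
               = (fun i => eval v (args i))).
    { intros M v HS; apply functional_extensionality; intro i; rewrite eval_qval.
      apply (implied_qrep (args i) M v HS). }
    split; intros H M v HS; specialize (H M v HS); simpl in *;
      rewrite (E M v HS) in *; exact H.
Qed.

End Quotient.

Lemma atom_sat_generic_point L (A : structure L) X (p : atype A X) (chi : atom L (A + X)) :
  closed_type p -> (atom_sat (qval (fun psi => diag_free psi \/ p psi)) chi <-> p chi).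
Proof.
  intro Hcl; rewrite atom_sat_qval; split; [apply Hcl|].
  intros Hp M v HS; apply HS; right; exact Hp.
Qed.

Section Morphisms.
Variable L : signature.
Variables M N : structure L.
Variable e : M -> N.

Lemma eval_hom : homomorphism e ->
  forall V (rho : V -> M) (t : term L V), eval (fun x => e (rho x)) t = e (eval rho t).
Proof.
  intros He V rho t; induction t as [x|f args IH]; simpl; auto.
  rewrite (proj1 He); f_equal; apply functional_extensionality; intro i; apply IH.
Qed.

Lemma atom_sat_hom : homomorphism e ->
  forall V (rho : V -> M) (a : atom L V), atom_sat rho a -> atom_sat (fun x => e (rho x)) a.
Proof.
  intros He V rho [t s|r args]; simpl.
  - rewrite !(eval_hom He); congruence.
  - replace (fun i => eval (fun x => e (rho x)) (args i)) with (fun i => e (eval rho (args i))).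
    + apply (proj2 He).
    + apply functional_extensionality; intro i; symmetry; apply (eval_hom He).
Qed.

Lemma atom_sat_embedding : embedding e ->
  forall V (rho : V -> M) (a : atom L V), atom_sat (fun x => e (rho x)) a <-> atom_sat rho a.
Proof.
  intros [Hh [Hinj Hrefl]] V rho [t s|r args]; simpl.
  - rewrite !(eval_hom Hh); split; [apply Hinj|congruence].
  - replace (fun i => eval (fun x => e (rho x)) (args i)) with (fun i => e (eval rho (args i))).
    + split; [apply Hrefl|apply (proj2 Hh)].
    + apply functional_extensionality; intro i; symmetry; apply (eval_hom Hh).
Qed.

Lemma univ_holds_embedding Phi Psi : embedding e -> univ_holds N Phi Psi -> univ_holds M Phi Psi.
Proof.
  intros He HN rho HPhi.
  destruct (HN (fun x => e (rho x))) as [b [Hb Hs]].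
  - intros a Ha; apply (atom_sat_embedding He); auto.
  - exists b; split; auto; apply (atom_sat_embedding He) in Hs; exact Hs.
Qed.

Lemma Mod_T_forall_embedding (T : theory L) :
  embedding e -> inhabited M -> Mod_T_forall T N -> Mod_T_forall T M.
Proof.
  intros He HM [_ HN]; split; auto.
  intros Phi Psi HT; apply (univ_holds_embedding He), HN, HT.
Qed.

Lemma embedding_cancel (K : structure L) (g : K -> M) (h : K -> N) :
  embedding e -> (forall k, e (g k) = h k) -> embedding h -> embedding g.
Proof.
  intros [[Hf Hr] [Hinj Hrefl]] Eg [[Hf' Hr'] [Hinj' Hrefl']].
  assert (Eargs : forall n (args : Fin.t n -> K),
             (fun i => e (g (args i))) = (fun i => h (args i)))
    by (intros; apply functional_extensionality; auto).
  split; [split|split].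
  - intros f args; apply Hinj; rewrite Eg, Hf', Hf, Eargs; reflexivity.
  - intros r args H; apply Hrefl; rewrite Eargs; auto.
  - intros k k' E; apply Hinj'; rewrite <- !Eg, E; reflexivity.
  - intros r args H; apply Hrefl'; rewrite <- Eargs; apply Hr, H.
Qed.

End Morphisms.

Definition point_type {L} {A B : structure L} (h : A -> B) {X} (bv : X -> B) : atype A X :=
  fun chi => atom_sat (pval h bv) chi.

Section PointType.
Variable L : signature.
Variables A B : structure L.
Variable h : A -> B.
Hypothesis hemb : embedding h.
Variable X : Type.
Variable bv : X -> B.

Let p := point_type h bv.
Let Sigma := fun psi => @diag_free L A X psi \/ p psi.

Lemma diag_free_point_type chi : diag_free chi -> p chi.
Proof.
  intro H; apply atom_sat_qval in H; apply (H B (pval h bv)).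
  intros ? [chi0 [-> H0]]; apply atom_sat_map_atom.
  apply (atom_sat_hom (proj1 hemb) (fun a => a) chi0 H0).
Qed.

Lemma implied_point_type chi : implied Sigma chi <-> p chi.
Proof.
  split.
  - intro H; apply (H B (pval h bv)); intros psi [Hd|Hp]; [apply diag_free_point_type, Hd|exact Hp].
  - intros Hp M v HS; apply HS; right; exact Hp.
Qed.

(* Well defined on classes, since every equation of Sigma holds at (h, bv). *)
Definition point_eval (c : quot_type p) : B := eval (pval h bv) (qrep c).

Lemma point_eval_qproj t : point_eval (qproj Sigma t) = eval (pval h bv) t.
Proof.
  apply (implied_qrep Sigma t B (pval h bv)); intros psi [Hd|Hp]; [apply diag_free_point_type, Hd|exact Hp].
Qed.

Lemma point_eval_embedding : embedding point_eval.
Proof.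
  split; [split|split].
  - intros f args; apply (point_eval_qproj (tapp (f := f) (fun i => qrep (args i)))).
  - intros r args H; exact (proj1 (implied_point_type (arel (fun i => qrep (args i)))) H).
  - intros c c' E; rewrite <- (qproj_qrep c), <- (qproj_qrep c').
    apply qproj_eq_iff; exact (proj2 (implied_point_type (aeq (qrep c) (qrep c'))) E).
  - intros r args H; exact (proj2 (implied_point_type (arel (fun i => qrep (args i)))) H).
Qed.

Lemma point_type_strongly_T_prime (T : theory L) :
  inhabited A -> Mod_T_forall T B -> strongly_T_prime T p.
Proof.
  intros [a0] HB; split; [|split].
  - intros chi H; exact (proj1 (implied_point_type chi) H).
  - eapply Mod_T_forall_embedding; [exact point_eval_embedding| |exact HB].
    exact (inhabits (qproj Sigma (tvar L (inl a0)))).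
  - eapply embedding_cancel; [exact point_eval_embedding| |exact hemb].
    intro a; apply point_eval_qproj.
Qed.

End PointType.

Section FiniteVariables.
Variable n : nat.

Definition fin_to_nat (i : Fin.t n) : nat := proj1_sig (Fin.to_nat i).

Definition extend_fin M (d : M) (f : Fin.t n -> M) (k : nat) : M :=
  match lt_dec k n with left H => f (Fin.of_nat_lt H) | right _ => d end.

Lemma extend_fin_to_nat M (d : M) f i : extend_fin d f (fin_to_nat i) = f i.
Proof.
  unfold extend_fin, fin_to_nat; destruct (lt_dec _ n) as [H|H].
  - rewrite (Fin.of_nat_ext H (proj2_sig (Fin.to_nat i))), Fin.of_nat_to_nat_inv; reflexivity.
  - destruct (H (proj2_sig (Fin.to_nat i))).
Qed.

Lemma extend_fin_lt M (d : M) f k :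
  k < n -> exists i, fin_to_nat i = k /\ extend_fin d f k = f i.
Proof.
  intro Hk; unfold extend_fin; destruct (lt_dec k n) as [H|H]; [|lia].
  exists (Fin.of_nat_lt H); split; auto.
  unfold fin_to_nat; rewrite Fin.to_nat_of_nat; reflexivity.
Qed.

Definition leaves_to_nat {P} (z : P + Fin.t n) : P + nat :=
  match z with inl a => inl a | inr i => inr (fin_to_nat i) end.

Definition leaves_of_nat {P} (d : P) (z : P + nat) : P + Fin.t n :=
  match z with inl a => inl a | inr k => extend_fin (inl d) inr k end.

Lemma atom_sat_leaves_to_nat L (M : structure L) P (e : P -> M) (rho : nat -> M) chi :
  atom_sat (pval e rho) (map_atom leaves_to_nat chi)
  <-> atom_sat (pval e (fun i => rho (fin_to_nat i))) chi.
Proof.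
  rewrite atom_sat_map_atom; apply atom_sat_ext; intros [a|i] _; reflexivity.
Qed.

Lemma atom_sat_leaves_of_nat L (M : structure L) P (e : P -> M) (d : P) (rho : nat -> M) a :
  vars_below n a ->
  (atom_sat (pval e rho) a
   <-> atom_sat (pval e (fun i => rho (fin_to_nat i))) (map_atom (leaves_of_nat d) a)).
Proof.
  intro Hb; rewrite atom_sat_map_atom; apply atom_sat_ext; intros [x|k] Hk; simpl; auto.
  destruct (extend_fin_lt (inl d) inr (Hb k Hk)) as [i [<- ->]]; reflexivity.
Qed.

End FiniteVariables.

Arguments leaves_to_nat {n P} z.

Lemma embedding_id L (A : structure L) : embedding (fun a : A => a).
Proof. split; [split|split]; auto. Qed.

Section Main.
Variable L : signature.
Variable T : theory L.
Variable A : structure L.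
Hypothesis HA : Mod_T_forall T A.

Lemma T_radical_sub_tp_a X (pi : atype A X) phi : T_radical T pi phi -> tp_a (zero_set pi) phi.
Proof.
  intros Hrad abar Habar; apply (Hrad (point_type (fun a : A => a) abar)); auto.
  apply point_type_strongly_T_prime; auto using embedding_id; exact (proj1 HA).
Qed.

Lemma tp_a_sub_T_radical : weakly_geom_closed A (Mod_T_forall T) ->
  forall n (pi : list (atom L (A + Fin.t n))) phi,
    tp_a (zero_set (fun psi => In psi pi)) phi -> T_radical T (fun psi => In psi pi) phi.
Proof.
  intros Hw n pi phi Htp p [Hcl [HM Hemb]] Hpi.
  destruct (proj1 HA) as [a0].
  set (v := qval (fun psi => diag_free psi \/ p psi)).
  set (rho := extend_fin (quot_map p a0) (fun i => v (inr i))).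
  (* the generic tuple x of A[x]/p, indexed by nat *)
  assert (Hrho : forall chi, atom_sat (pval (quot_map p) rho) (map_atom leaves_to_nat chi)
                             <-> p chi).
  { intro chi; rewrite atom_sat_leaves_to_nat, <- (atom_sat_generic_point chi Hcl).
    apply atom_sat_ext; intros [a|i] _; [reflexivity|apply extend_fin_to_nat]. }
  apply Hrho, (Hw _ HM _ Hemb (map (map_atom leaves_to_nat) pi)).
  - intros rhoA HPhi; apply atom_sat_leaves_to_nat, Htp.
    intros psi Hpsi; apply atom_sat_leaves_to_nat, HPhi, in_map, Hpsi.
  - intros a Ha; apply in_map_iff in Ha as [chi [<- Hchi]]; apply Hrho, Hpi, Hchi.
Qed.

Lemma weakly_geom_closed_of_tp_a_sub_T_radical :
  (forall n (pi : list (atom L (A + Fin.t n))) phi,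
     tp_a (zero_set (fun psi => In psi pi)) phi -> T_radical T (fun psi => In psi pi) phi) ->
  weakly_geom_closed A (Mod_T_forall T).
Proof.
  intros Hsub B HB h hemb Phi psi Htrue rho HPhi.
  destruct (proj1 HA) as [a0].
  destruct (atoms_vars_bounded (psi :: Phi)) as [n Hn].
  set (tr := map_atom (L := L) (leaves_of_nat n a0)).
  assert (Hpsi : point_type h (fun i => rho (fin_to_nat i)) (tr psi)).
  { apply (Hsub n (map tr Phi) (tr psi)).
    - intros abar Habar.
      set (rhoA := fun k => pval (fun a : A => a) abar (leaves_of_nat n a0 (inr k))).
      assert (Hag : forall chi, atom_sat (pval (fun a : A => a) abar) (tr chi)
                                <-> atom_sat (pval (fun a : A => a) rhoA) chi).
      { intro chi; unfold tr; rewrite atom_sat_map_atom.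
        apply atom_sat_ext; intros [a|k] _; reflexivity. }
      apply Hag, Htrue; intros chi Hchi; apply Hag, Habar, in_map, Hchi.
    - apply point_type_strongly_T_prime; auto; exact (proj1 HA).
    - intros chi Hchi; apply in_map_iff in Hchi as [a [<- Ha]].
      apply atom_sat_leaves_of_nat; auto with datatypes. }
  apply (atom_sat_leaves_of_nat B h a0 rho (Hn psi (or_introl eq_refl))), Hpsi.
Qed.

End Main.

Theorem lemma4p17 (L : signature) (T : theory L)
  (HT : forall phi, T phi -> sentence phi)
  (A : structure L) (HA : Mod_T_forall T A) :
  weakly_geom_closed A (Mod_T_forall T) <->
  (forall (n : nat) (pi : list (atom L (A + Fin.t n))),
     forall phi : atom L (A + Fin.t n),
       tp_a (zero_set (fun psi => In psi pi)) phi <->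
       T_radical T (fun psi => In psi pi) phi).
Proof.
  split.
  - intros Hw n pi phi; split.
    + apply tp_a_sub_T_radical; auto.
    + apply T_radical_sub_tp_a; auto.
  - intro Heq; apply weakly_geom_closed_of_tp_a_sub_T_radical; auto.
    intros n pi phi; apply Heq.
Qed.
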